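(* Let $M, N, M_{CP}$ be positive integers, $f_c>0$ a carrier frequency, $\Delta f>0$ a subcarrier spacing, $T = 1/\Delta f$, $T_{CP} = \frac{M_{CP}}{M}T$ and $T_u = \frac{M+M_{CP}}{M}T$. Let $X[n,m]\in\mathbb{C}$ for $n=0,\dots,N+1$, $m=0,\dots,M-1$, and let the transmitted baseband waveform be \[ s(t)=\frac{1}{\sqrt{M}}\sum_{n=0}^{N+1}\sum_{m=0}^{M-1}X[n,m]\,g(t-nT_u+T_{CP})\,e^{j2\pi m\Delta f(t-nT_u)}, \] where $g$ is the unit rectangular pulse of duration $T_u$ (equal to $1$ on $[0,T_u)$ and $0$ elsewhere). Define the samples $S[n,l]=s(nT_u+\frac{l}{M}T)=\frac{1}{\sqrt{M}}\sum_{m=0}^{M-1}X[n,m]e^{j2\pi ml/M}$ for $n=0,\dots,N+1$, $l=0,\dots,M-1$. Let the (noise-free) received baseband signal be \[ r(t)=\sum_{i=1}^{N_P}\beta_i\, e^{j2\pi\nu_i t}\, s\!\left(t-\Big(\tau_i-\frac{\nu_i}{f_c}t\Big)\right), \] with path gains $\beta_i\in\mathbb{C}$, delays $\tau_i$ and Doppler shifts $\nu_i$ ($i=1,\dots,N_P$). Set $k_i=\nu_i N T$, $l_i=\tau_i M\Delta f$, and $p_i = f_c/\nu_i$ (with $1/p_i:=0$ if $\nu_i=0$). Assume $l_i\geqslant 1$ and $l_i\leqslant l_{\max}$ for all $i$, where $l_{\max}=\lceil \tau_{\max} M\Delta f\rceil$ with $\tau_{\max}$ the maximum delay; assume $|p_i|>(N+2)M$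 for all $i$; and assume the CP length satisfies $l_{\max}+2\leqslant M_{CP}<M$. Define the received samples $R[n,l]=r(nT_u+\frac{l}{M}T)$. Then for all $n=0,\dots,N+1$ and $l=0,\dots,M-1$, \[ R[n,l]=\sum_{i=1}^{N_P}\sum_{l'=0}^{M-1}h^{i}_{n}[l,l']\,S[n,l'], \] where \[ h^{i}_{n}[l,l']=\beta_i\, e^{j2\pi\frac{n(M+M_{CP})+l}{M}\frac{k_i}{N}\left(1+\frac{(M-1)\Delta f}{2f_c}\right)}\, e^{j\pi\frac{M-1}{M}(l-l'-l_i)}\, \frac{\sin\!\Big(\pi\big(l-l'-l_i+\frac{n(M+M_{CP})+l}{p_i}\big)\Big)}{M\sin\!\Big(\frac{\pi}{M}\big(l-l'-l_i+\frac{n(M+M_{CP})+l}{p_i}\big)\Big)}, \] with the ratio of sines interpreted by continuity (as $M$) when its argument is a multiple of $M$... more precisely, the factor $\frac{\sin(\pi x)}{M\sin(\pi x/M)}$ is understood as its continuous extension $\frac{1}{M}\sum_{m=0}^{M-1}e^{j2\pi m x/M}e^{-j\pi\frac{M-1}{M}x}$.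
   Context: This models a CP-OFDM-based OTFS system in a multipath linear time-variant channel with the Doppler squint effect (the Doppler shift of path $i$ at baseband frequency $f$ is $\frac{\nu_i}{f_c}(f_c+f)$). The $N+2$ OFDM symbols each consist of a cyclic prefix of $M_{CP}$ samples followed by $M$ samples; sampling period is $T/M$. Noise is disregarded. *)

From HB Require Import structures.
From mathcomp Require Import all_boot all_order all_algebra.
From mathcomp Require Import complex.
From mathcomp Require Import all_classical all_reals all_analysis.
Set Implicit Arguments. Unset Strict Implicit. Unset Printing Implicit Defensive.
Import Order.TTheory GRing.Theory Num.Theory.
Local Open Scope ring_scope.
Local Open Scope complex_scope.

Section OTFS.
Variable R : realType.
Local Notation C := R[i].

Definition expj (th : R) : C := Complex (cos th) (sin th).

Definition cR (x : R) : C := x%:C.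

Variables (M N Mcp : nat) (fc df : R).

Definition Tsym : R := df^-1.
Definition Tcp : R := (Mcp%:R / M%:R) * Tsym.
Definition Tu  : R := ((M + Mcp)%:R / M%:R) * Tsym.

Definition gpulse (t : R) : R := if (0 <= t) && (t < Tu) then 1 else 0.

Definition sig (X : nat -> nat -> C) (t : R) : C :=
  cR (Num.sqrt (M%:R))^-1 *
  \sum_(n < N.+2) \sum_(m < M)
     X n m * cR (gpulse (t - n%:R * Tu + Tcp))
           * expj (2 * pi * m%:R * df * (t - n%:R * Tu)).

Definition Ssamp (X : nat -> nat -> C) (n l : nat) : C :=
  sig X (n%:R * Tu + l%:R / M%:R * Tsym).

Definition rsig (NP : nat) (beta : nat -> C) (tau nu : nat -> R)
    (X : nat -> nat -> C) (t : R) : C :=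
  \sum_(i < NP) beta i * expj (2 * pi * nu i * t)
                 * sig X (t - (tau i - nu i / fc * t)).

Definition Rsamp NP beta tau nu X (n l : nat) : C :=
  rsig NP beta tau nu X (n%:R * Tu + l%:R / M%:R * Tsym).

(* normalized Doppler k_i, normalized delay l_i, and 1/p_i = nu_i / f_c
   (which is 0 when nu_i = 0, as in the paper's convention) *)
Definition kD (nu : nat -> R) i : R := nu i * N%:R * Tsym.
Definition lD (tau : nat -> R) i : R := tau i * M%:R * df.
Definition invp (nu : nat -> R) i : R := nu i / fc.

Definition tau_max NP (tau : nat -> R) : R := \big[Num.max/0]_(i < NP) tau i.
Definition lmax NP (tau : nat -> R) : int := Num.ceil (tau_max NP tau * M%:R * df).

(* continuous extension of sin(pi x) / (M sin(pi x / M)):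
   (1/M) sum_{m<M} e^{j 2 pi m x / M} e^{- j pi (M-1) x / M} *)
Definition Dker (x : R) : C :=
  cR (M%:R)^-1 * \sum_(m < M) expj (2 * pi * m%:R * x / M%:R)
                 * expj (- (pi * (M%:R - 1) * x / M%:R)).

Definition hcoef (beta : nat -> C) (tau nu : nat -> R) (i n l l' : nat) : C :=
  let a := ((n * (M + Mcp) + l)%:R : R) in
  let x := l%:R - l'%:R - lD tau i in
  beta i
  * expj (2 * pi * (a / M%:R) * (kD nu i / N%:R)
            * (1 + (M%:R - 1) * df / (2 * fc)))
  * expj (pi * ((M%:R - 1) / M%:R) * x)
  * Dker (x + a * invp nu i).

End OTFS.

(* At the sampling instant t = n T_u + l T/M, path i reads the transmitted
   waveform at t - tau_i + nu_i t / f_c = n T_u + y T/M with fractional index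
   y = l - l_i + (n (M + M_CP) + l) / p_i.  The bounds on l_i, M_CP and p_i keep
   y in [-M_CP, M), where only the pulse of symbol n is active, so the value read
   is the trigonometric interpolation (1/sqrt M) sum_m X[n,m] e^{j 2 pi m y/M} of
   the samples S[n, .].  Orthogonality of the DFT basis rewrites it as
   sum_l' D(y - l') S[n,l'] with the Dirichlet kernel D; the Doppler phase
   e^{j 2 pi nu_i t} and the linear phase that turns D into the symmetric kernel
   [Dker] combine into the coefficients h. *)

From HB Require Import structures.
From mathcomp Require Import all_boot all_order all_algebra.
From mathcomp Require Import complex.
From mathcomp Require Import all_classical all_reals all_analysis.
From mathcomp Require Import ring lra zify.
Set Implicit Arguments. Unset Strict Implicit. Unset Printing Implicit Defensive.
Import Order.TTheory GRing.Theory Num.Theory.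
Local Open Scope ring_scope.
Local Open Scope complex_scope.

Lemma sum_root_unity_eq0 (F : idomainType) (z : F) (M : nat) :
  z ^+ M = 1 -> z != 1 -> \sum_(l < M) z ^+ l = 0.
Proof.
move=> zM z1; apply/eqP; have := subrX1 z M.
by rewrite zM subrr => /esym/eqP; rewrite mulf_eq0 subr_eq0 (negbTE z1).
Qed.

Section Expj.
Variable R : realType.

Lemma expjD (a b : R) : expj (a + b) = expj a * expj b.
Proof. by rewrite /expj /= cosD sinD; congr Complex; ring. Qed.

Lemma expj0 : expj (0 : R) = 1.
Proof. by rewrite /expj cos0 sin0. Qed.

Lemma expjMn (a : R) k : expj a ^+ k = expj (k%:R * a).
Proof.
elim: k => [|k IH]; first by rewrite mul0r expj0.
by rewrite exprS IH -expjD mulrSr mulrDl mul1r addrC.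
Qed.

Lemma expj_2pi : expj (2 * pi : R) = 1.
Proof. by rewrite /expj mulr_natl cos2pi sin2pi. Qed.

Lemma expj_2piMn k : expj (2 * pi * k%:R : R) = 1.
Proof. by rewrite mulrC -expjMn expj_2pi expr1n. Qed.

Lemma expjB2pi (a : R) : expj (a - 2 * pi) = expj a.
Proof. by rewrite -[in RHS](subrK (2 * pi) a) [in RHS]expjD expj_2pi mulr1. Qed.

Lemma expj_neq1 (t : R) : 0 < t < 2 * pi -> expj t != 1.
Proof.
move=> /andP[t_gt0 t_lt2pi]; apply/negP => /eqP [] cos_t1 _.
have pi_gt0 := pi_gt0 R.
have zero_in : (0 : R) \in `[0, pi]%R by rewrite in_itv /= lexx ltW.
have [t_le_pi | pi_lt_t] := lerP t pi.
  have t_in : t \in `[0, pi]%R by rewrite in_itv /= t_le_pi ltW.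
  have := @cos_inj R t 0 t_in zero_in; rewrite cos_t1 cos0 => /(_ erefl) t0.
  by move: t_gt0; rewrite t0 ltxx.
have t'_in : 2 * pi - t \in `[0, pi]%R by rewrite in_itv /=; apply/andP; split; lra.
have := @cos_inj R _ 0 t'_in zero_in.
rewrite cos0 addrC cosD cosN sinN mulr_natl cos2pi sin2pi cos_t1.
by rewrite mulr1 mulr0 subr0 => /(_ erefl); lra.
Qed.

End Expj.

Section Dft.
Variables (R : realType) (M : nat).
Hypothesis M_gt0 : (0 < M)%N.
Local Notation C := R[i].

Let M_neq0 : (M%:R : R) != 0. Proof. by rewrite pnatr_eq0 -lt0n. Qed.

Lemma expj_frac_neq1 k : (0 < k < M)%N -> expj (2 * pi * k%:R / M%:R : R) != 1.
Proof.
move=> /andP[k_gt0 k_ltM]; apply: expj_neq1.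
have pi_gt0 := pi_gt0 R; have M_gt0R : (0 : R) < M%:R by rewrite ltr0n.
rewrite divr_gt0 ?mulr_gt0 ?ltr0n //= ltr_pdivrMr // ltr_pM2l ?mulr_gt0 //.
by rewrite ltr_nat.
Qed.

Lemma sum_expj_orth (m m' : nat) : (m < M)%N -> (m' < M)%N ->
  \sum_(l < M) expj (2 * pi * l%:R * (m%:R - m'%:R) / M%:R : R)
  = if m == m' then M%:R else 0.
Proof.
move=> m_ltM m'_ltM; case: eqP => [<-|/eqP m_neq].
  under eq_bigr do rewrite subrr mulr0 mul0r expj0.
  by rewrite sumr_const card_ord.
set z := expj (2 * pi * (m%:R - m'%:R) / M%:R : R).
rewrite (eq_bigr (fun l : 'I_M => z ^+ l)); last first.
  by move=> l _; rewrite expjMn /z; congr expj; ring.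
apply: sum_root_unity_eq0.
  rewrite /z expjMn.
  have -> : M%:R * (2 * pi * (m%:R - m'%:R) / M%:R)
            = - (2 * pi * m'%:R) + 2 * pi * m%:R :> R by field.
  rewrite expjD expj_2piMn mulr1.
  have := expjD (- (2 * pi * m'%:R)) (2 * pi * m'%:R : R).
  by rewrite addNr expj0 expj_2piMn mulr1 => <-.
have [m'_lt_m | m_lt_m'] : (m' < m)%N \/ (m < m')%N by lia.
  by rewrite /z -natrB 1?ltnW // expj_frac_neq1 //; lia.
rewrite /z; have -> : 2 * pi * (m%:R - m'%:R) / M%:R
                      = 2 * pi * (M + m - m')%N%:R / M%:R - 2 * pi :> R.
  by rewrite natrB 1?natrD; [field | lia].
by rewrite expjB2pi expj_frac_neq1 //; lia.
Qed.

Definition dirichlet (y : R) : C :=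
  cR (M%:R)^-1 * \sum_(m < M) expj (2 * pi * m%:R * y / M%:R).

Definition idft (x : nat -> C) (y : R) : C :=
  cR (Num.sqrt M%:R)^-1 * \sum_(m < M) x m * expj (2 * pi * m%:R * y / M%:R).

Lemma DkerE y : Dker M y = dirichlet y * expj (- (pi * (M%:R - 1) * y / M%:R)).
Proof. by rewrite /Dker /dirichlet -[_ * _ * expj _]mulrA mulr_suml. Qed.

Lemma dirichlet_interp (m : nat) (y : R) : (m < M)%N ->
  \sum_(l < M) dirichlet (y - l%:R) * expj (2 * pi * m%:R * l%:R / M%:R)
  = expj (2 * pi * m%:R * y / M%:R).
Proof.
move=> m_ltM.
transitivity (\sum_(m' < M) cR (M%:R)^-1 * expj (2 * pi * m'%:R * y / M%:R)
   * \sum_(l < M) expj (2 * pi * l%:R * (m%:R - m'%:R) / M%:R)).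
  under eq_bigr do rewrite /dirichlet -mulrA mulr_suml mulr_sumr.
  rewrite exchange_big /=; apply: eq_bigr => m' _; rewrite mulr_sumr.
  apply: eq_bigr => l _; rewrite -!mulrA -!expjD; congr (_ * expj _); by field.
under eq_bigr => m' _ do rewrite sum_expj_orth //.
rewrite (bigD1 (Ordinal m_ltM)) //= eqxx big1 ?addr0; last first.
  move=> m' m'_neq; rewrite ifF ?mulr0 //.
  by apply: contraNF m'_neq => /eqP m_eq; apply/eqP/val_inj; rewrite /= m_eq.
by rewrite mulrAC /cR fmorphV rmorph_nat mulVf ?mul1r // pnatr_eq0 -lt0n.
Qed.

Lemma idft_interp (x : nat -> C) (y : R) :
  \sum_(l < M) dirichlet (y - l%:R) * idft x l%:R = idft x y.
Proof.
rewrite /idft; under eq_bigr do rewrite mulrCA mulr_sumr.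
rewrite -mulr_sumr exchange_big /=; congr (_ * _); apply: eq_bigr => m _.
by rewrite -(dirichlet_interp _ (ltn_ord m)) mulr_sumr; apply: eq_bigr => l _; ring.
Qed.

End Dft.

Section Samples.
Variables (R : realType) (M N Mcp : nat) (df : R).
Hypotheses (M_gt0 : (0 < M)%N) (df_gt0 : 0 < df).
Local Notation C := R[i].

Let M_gt0R : (0 : R) < M%:R. Proof. by rewrite ltr0n. Qed.

Lemma gpulse_scale (K : R) :
  gpulse M Mcp df (K * (Tsym df / M%:R))
  = if (0 <= K) && (K < M%:R + Mcp%:R) then 1 else 0.
Proof.
have step_gt0 : 0 < Tsym df / M%:R by rewrite divr_gt0 ?invr_gt0.
rewrite /gpulse pmulr_lge0 //.
have -> : Tu M Mcp df = (M%:R + Mcp%:R) * (Tsym df / M%:R) by rewrite /Tu natrD; ring.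
by rewrite ltr_pM2r.
Qed.

(* On the window [-Mcp, M) of symbol [n], cyclic prefix included, only the
   pulse of that symbol is nonzero. *)
Lemma sig_window (X : nat -> nat -> C) (n : nat) (y : R) :
  (n <= N.+1)%N -> - Mcp%:R <= y < M%:R ->
  sig M N Mcp df X (n%:R * Tu M Mcp df + y / M%:R * Tsym df) = idft M (X n) y.
Proof.
move=> n_le /andP[y_ge y_lt]; rewrite /sig /idft; congr (_ * _).
rewrite (bigD1 (Ordinal (n_le : (n < N.+2)%N))) //= [\sum_(j < N.+2 | _) _]big1 ?addr0.
  apply: eq_bigr => m _.
  have -> : n%:R * Tu M Mcp df + y / M%:R * Tsym df - n%:R * Tu M Mcp df + Tcp M Mcp df
            = (y + Mcp%:R) * (Tsym df / M%:R) by rewrite /Tcp; ring.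
  rewrite gpulse_scale ifT; last by apply/andP; split; lra.
  rewrite /cR mulr1; congr (_ * expj _).
  by rewrite /Tsym; field; rewrite !gt_eqF.
move=> j /eqP j_neq; apply: big1 => m _.
have -> : n%:R * Tu M Mcp df + y / M%:R * Tsym df - j%:R * Tu M Mcp df + Tcp M Mcp df
          = ((n%:R - j%:R) * (M%:R + Mcp%:R) + y + Mcp%:R) * (Tsym df / M%:R).
  by rewrite /Tcp /Tu natrD; ring.
rewrite gpulse_scale ifF ?mulr0 ?mul0r //.
have Mcp_ge0 : (0 : R) <= Mcp%:R by [].
have [j_lt | n_lt] : (j.+1 <= n)%N \/ (n.+1 <= j)%N.
  have : (j : nat) <> n by move=> e; apply: j_neq; apply: val_inj.
  lia.
- have : j%:R + 1 <= n%:R :> R by rewrite natr1 ler_nat.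
  by move=> ?; apply/negbTE; rewrite negb_and -leNgt; apply/orP; right; nra.
- have : n%:R + 1 <= j%:R :> R by rewrite natr1 ler_nat.
  by move=> ?; apply/negbTE; rewrite negb_and -ltNge; apply/orP; left; nra.
Qed.

Lemma Ssamp_idft (X : nat -> nat -> C) (n l : nat) :
  (n <= N.+1)%N -> (l < M)%N -> Ssamp M N Mcp df X n l = idft M (X n) l%:R.
Proof.
move=> n_le l_lt; apply: sig_window => //.
by rewrite ltr_nat l_lt andbT (le_trans _ (ler0n R l)) // oppr_le0.
Qed.

End Samples.

Section Path.
Variables (R : realType) (M N Mcp : nat) (fc df : R).
Hypotheses (M_gt0 : (0 < M)%N) (N_gt0 : (0 < N)%N) (fc_gt0 : 0 < fc) (df_gt0 : 0 < df).
Variables (tau nu : nat -> R) (i : nat).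
Local Notation tsamp n l := (n%:R * Tu M Mcp df + l%:R / M%:R * Tsym df).

Let M_gt0R : (0 : R) < M%:R. Proof. by rewrite ltr0n. Qed.
Let N_gt0R : (0 : R) < N%:R. Proof. by rewrite ltr0n. Qed.

(* The fractional index, within OFDM symbol [n], at which path [i] reads the
   transmitted waveform when the [l]-th sample of that symbol is received. *)
Definition squint_index (n l : nat) : R :=
  l%:R - lD M df tau i + (n * (M + Mcp) + l)%:R * invp fc nu i.

Lemma delayed_sample_time (n l : nat) :
  tsamp n l - (tau i - nu i / fc * tsamp n l)
  = n%:R * Tu M Mcp df + squint_index n l / M%:R * Tsym df.
Proof.
rewrite /squint_index /lD /invp /Tu /Tsym !natrD natrM.
by field; rewrite !gt_eqF.
Qed.

Lemma squint_index_window (n l : nat) :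
  (Mcp < M)%N -> 1 <= lD M df tau i -> lD M df tau i + 2 <= Mcp%:R ->
  `|invp fc nu i| * (N.+2 * M)%:R < 1 ->
  (n <= N.+1)%N -> (l < M)%N ->
  - Mcp%:R <= squint_index n l < M%:R.
Proof.
move=> Mcp_lt lD_ge1 lD_le p_large n_le l_lt.
set a : R := (n * (M + Mcp) + l)%:R.
have a_le : a <= 2 * (N.+2 * M)%:R by rewrite -natrM ler_nat; nia.
have shift_lt2 : `|a * invp fc nu i| < 2.
  rewrite normrM ger0_norm ?ler0n //.
  have : 0 <= `|invp fc nu i| by []; nra.
have l_le : l%:R + 1 <= M%:R :> R by rewrite natr1 ler_nat.
have l_ge0 : (0 : R) <= l%:R by [].
move: shift_lt2; rewrite ltr_norml /squint_index -/a => /andP[? ?].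
apply/andP; split; lra.
Qed.

Lemma hcoefE (beta : nat -> R[i]) (n l l' : nat) :
  hcoef M N Mcp fc df beta tau nu i n l l'
  = beta i * expj (2 * pi * nu i * tsamp n l) * dirichlet M (squint_index n l - l'%:R).
Proof.
rewrite /hcoef DkerE /squint_index.
set x := l%:R - l'%:R - lD M df tau i.
set A := (n * (M + Mcp) + l)%:R * invp fc nu i.
set P := 2 * pi * _ * _ * _.
set Q := pi * _ * x.
set W := - _.
have -> : l%:R - lD M df tau i + A - l'%:R = x + A by rewrite /x; ring.
transitivity (beta i * (expj P * expj Q * expj W) * dirichlet M (x + A)); first ring.
rewrite -!expjD; congr (_ * expj _ * _).
rewrite /P /Q /W /x /A /invp /kD /Tu /Tsym !natrD natrM.
by field; rewrite !gt_eqF.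
Qed.

End Path.

Theorem theorem1 (R : realType) (M N Mcp : nat) (fc df : R)
    (NP : nat) (beta : nat -> R[i]) (tau nu : nat -> R)
    (X : nat -> nat -> R[i]) :
  (0 < M)%N -> (0 < N)%N -> (0 < Mcp)%N ->
  0 < fc -> 0 < df ->
  (forall i, (i < NP)%N -> 1 <= lD M df tau i) ->
  (forall i, (i < NP)%N -> lD M df tau i <= (lmax M df NP tau)%:~R) ->
  (* |p_i| > (N+2) M, with 1/p_i = 0 when nu_i = 0 *)
  (forall i, (i < NP)%N -> `|invp fc nu i| * ((N.+2 * M)%:R) < 1) ->
  (lmax M df NP tau + 2 <= Mcp%:Z)%R -> (Mcp < M)%N ->
  forall n l : nat, (n <= N.+1)%N -> (l < M)%N ->
    Rsamp M N Mcp fc df NP beta tau nu X n l =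
    \sum_(i < NP) \sum_(l' < M)
       hcoef M N Mcp fc df beta tau nu i n l l' * Ssamp M N Mcp df X n l'.
Proof.
move=> M_gt0 N_gt0 _ fc_gt0 df_gt0 lD_ge1 lD_le_lmax p_large lmax_le Mcp_lt.
move=> n l n_le l_lt.
have lmax_leR : (lmax M df NP tau)%:~R + 2 <= Mcp%:R :> R.
  by move: lmax_le; rewrite -(ler_int R) intrD.
rewrite /Rsamp /rsig; apply: eq_bigr => [[i i_lt]] _ /=.
have window : - Mcp%:R <= squint_index M Mcp fc df tau nu i n l < M%:R.
  apply: (squint_index_window (N := N)) => //; first exact: lD_ge1.
    by apply: le_trans lmax_leR; rewrite lerD2r lD_le_lmax.
  exact: p_large.
rewrite delayed_sample_time ?sig_window // -(idft_interp M_gt0) mulr_sumr.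
apply: eq_bigr => l' _.
by rewrite hcoefE // Ssamp_idft // mulrA.
Qed.
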